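(* (a) Let $n\ge2$ and $m$ be integers with $\gcd(m,n)=1$, and let $\lambda=re^{\pi i m/n}$ with $r\in[2^{-1/n},1)$. Then $A_\lambda$ is a $2n$-gon all of whose angles equal $\pi(n-1)/n$; in particular $A_\lambda$ has non-empty interior. (b) Let $n\ge1$ and $m$ be integers with $\gcd(m,2n+1)=1$, and let $\lambda=re^{2\pi i m/(2n+1)}$ with $r\in[2^{-1/(2n+1)},1)$. Then $A_\lambda$ is a $(4n+2)$-gon all of whose angles equal $2n\pi/(2n+1)$; in particular $A_\lambda$ has non-empty interior.
   Context: $A_\lambda=\{\sum_{n\ge0}a_n\lambda^n:a_n\in\{-1,1\}\}$ for $|\lambda|<1$, the attractor of the iterated function system $\{\lambda z-1,\lambda z+1\}$. *)

From Stdlib Require Import Reals ZArith.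
From Coquelicot Require Import Coquelicot.
Open Scope C_scope.

Definition A_set (lam : C) : C -> Prop :=
  fun z => exists a : nat -> C, (forall j, a j = RtoC 1 \/ a j = RtoC (-1)) /\
    @is_series C_AbsRing C_NormedModule (fun j => a j * lam ^ j) z.

Definition cis (t : R) : C := (cos t, sin t).

Definition conv_hull (k : nat) (v : nat -> C) : C -> Prop :=
  fun z => exists w : nat -> R, (forall j, (j < k)%nat -> 0 <= w j)%R /\
    sum_n (fun j => w j) (k - 1) = 1%R /\
    z = sum_n (fun j => RtoC (w j) * v j) (k - 1).

(* [is_polygon_all_angles A k theta]: A is (the closed region bounded by) a
   k-gon whose vertices, listed counterclockwise and indexed periodically
   (v (j+k) = v j), are v 0, ..., v (k-1), and whose interior angle at every
   vertex equals theta.  The interior angle at v (j+1) being theta means that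
   the edge direction turns by exactly pi - theta (counterclockwise) there:
   the next edge is a positive real multiple of e^{i(pi-theta)} times the
   previous edge. *)
Definition is_polygon_all_angles (A : C -> Prop) (k : nat) (theta : R) : Prop :=
  exists v : nat -> C,
    (forall j, v (j + k)%nat = v j) /\
    (forall j, v (S j) - v j <> RtoC 0) /\
    (forall j, exists rho : R, (0 < rho)%R /\
        v (S (S j)) - v (S j) = RtoC rho * cis (PI - theta) * (v (S j) - v j)) /\
    (forall z, A z <-> conv_hull k v z).

Definition nonempty_interior (A : C -> Prop) : Prop :=
  exists z : C, exists eps : R, (0 < eps)%R /\
    forall w : C, (Cmod (w - z) < eps)%R -> A w.

(* Let lam = r e^{pi i M/N} with gcd(M, N) = 1 and R = 1/(1 - r^N).  Since lam^N = rho is real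
   with |rho| R = R - 1, the zonotope Z = {sum_{l<N} t_l lam^l : |t_l| <= R} satisfies
   +-1 + lam Z <= Z (the term t_{N-1} lam^N is folded into the coefficient of lam^0); Z is
   closed, so it contains A_lam.  Conversely, if R >= 2, i.e. r^N >= 1/2, each point of Z has a
   greedy +-1 expansion: after the digit d = sign t_0 the remainder t_0 - d has modulus at most
   R - 1 = |rho| R and is folded back as a coefficient of lam^N.  Hence A_lam = Z.  Writing
   l M = q N + k, lam^l = (-1)^q r^l e^{pi i k/N} and l |-> k is a bijection mod N, so Z is
   spanned by segments in the N directions k pi/N: a 2N-gon whose edges are the doubled
   generators in the order of their directions, turning by pi/N at every vertex.
   Part (b) is part (a) with N = 2n+1 and M = 2m. *)
From Stdlib Require Import Reals ZArith Lia Lra.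
From Coquelicot Require Import Coquelicot.
Open Scope C_scope.

(* [ring] for goals whose equality is stated at the carrier of a Coquelicot structure on [C]. *)
Ltac ring_C := match goal with |- ?a = ?b => change (@eq C a b) end; ring.

Lemma C_eq (a b : C) : fst a = fst b -> snd a = snd b -> a = b.
Proof. intros; apply injective_projections; auto. Qed.

Lemma sum_n_zero {G : AbelianMonoid} (f : nat -> G) K :
  (forall l, (l <= K)%nat -> f l = zero) -> sum_n f K = zero.
Proof.
  induction K as [|K IH]; intros Hf.
  - rewrite sum_O; apply Hf; lia.
  - rewrite sum_Sn, IH, (Hf (S K)) by (lia || (intros; apply Hf; lia)); apply plus_zero_l.
Qed.

Lemma sum_n_single {G : AbelianMonoid} (f : nat -> G) K p : (p <= K)%nat ->
  (forall l, (l <= K)%nat -> l <> p -> f l = zero) -> sum_n f K = f p.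
Proof.
  induction K as [|K IH]; intros Hp Hf.
  - rewrite sum_O; replace p with 0%nat by lia; reflexivity.
  - rewrite sum_Sn; destruct (Nat.eq_dec p (S K)) as [->|Hne].
    + rewrite sum_n_zero by (intros; apply Hf; lia); apply plus_zero_l.
    + rewrite IH, (Hf (S K)) by (lia || (intros; apply Hf; lia)); apply plus_zero_r.
Qed.

Lemma sum_n_shift {G : AbelianMonoid} (f : nat -> G) K :
  sum_n f (S K) = plus (f 0%nat) (sum_n (fun l => f (S l)) K).
Proof.
  induction K as [|K IH].
  - now rewrite sum_Sn, !sum_O.
  - rewrite sum_Sn, IH, sum_Sn; symmetry; apply plus_assoc.
Qed.

Lemma sum_n_le_loc (f g : nat -> R) K :
  (forall l, (l <= K)%nat -> f l <= g l)%R -> (sum_n f K <= sum_n g K)%R.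
Proof. intros; rewrite !sum_n_Reals; now apply sum_Rle. Qed.

Lemma sum_n_nonneg (f : nat -> R) K :
  (forall l, (l <= K)%nat -> 0 <= f l)%R -> (0 <= sum_n f K)%R.
Proof.
  intros Hf; replace 0%R with (sum_n (fun _ => 0%R) K)
    by (rewrite sum_n_const; apply Rmult_0_r).
  now apply sum_n_le_loc.
Qed.

Definition point_mass (p : nat) (x : R) (j : nat) : R := if (j =? p)%nat then x else 0%R.

Lemma sum_n_point_mass p x K : (p <= K)%nat -> sum_n (point_mass p x) K = x.
Proof.
  intros Hp; rewrite (sum_n_single _ _ p Hp).
  - unfold point_mass; now rewrite Nat.eqb_refl.
  - intros l _ Hl; unfold point_mass; now rewrite (proj2 (Nat.eqb_neq l p) Hl).
Qed.

Lemma sum_n_point_mass_scal p x (f : nat -> C) K : (p <= K)%nat ->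
  sum_n (fun j => RtoC (point_mass p x j) * f j) K = RtoC x * f p.
Proof.
  intros Hp; rewrite (sum_n_single _ _ p Hp).
  - unfold point_mass; now rewrite Nat.eqb_refl.
  - intros l _ Hl; unfold point_mass; rewrite (proj2 (Nat.eqb_neq l p) Hl); apply Cmult_0_l.
Qed.

Lemma sum_n_ge_term (f : nat -> R) K p : (p <= K)%nat ->
  (forall l, (l <= K)%nat -> 0 <= f l)%R -> (f p <= sum_n f K)%R.
Proof.
  intros Hp Hf; rewrite <- (sum_n_point_mass p (f p) K Hp).
  apply sum_n_le_loc; intros l Hl; unfold point_mass.
  destruct (Nat.eqb_spec l p) as [->|]; [lra | now apply Hf].
Qed.

Lemma Cmod_sum_n_le (f : nat -> C) K :
  (Cmod (sum_n f K) <= sum_n (fun l => Cmod (f l)) K)%R.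
Proof. exact (norm_sum_n_m (V := C_NormedModule) f 0 K). Qed.

Lemma sum_n_Cmult_l (a : C) (f : nat -> C) K : sum_n (fun j => a * f j) K = a * sum_n f K.
Proof. apply (sum_n_mult_l (K := C_Ring)). Qed.

Lemma sum_n_Cplus (f g : nat -> C) K : sum_n (fun j => f j + g j) K = sum_n f K + sum_n g K.
Proof. apply (sum_n_plus (G := C_AbelianMonoid)). Qed.

Lemma sum_n_Cminus (f g : nat -> C) K : sum_n (fun j => f j - g j) K = sum_n f K - sum_n g K.
Proof.
  rewrite (sum_n_ext _ (fun j => f j + (-1) * g j)) by (intros; ring_C).
  rewrite sum_n_Cplus, sum_n_Cmult_l; ring_C.
Qed.

Lemma sum_n_Rplus (f g : nat -> R) K : sum_n (fun j => f j + g j)%R K = (sum_n f K + sum_n g K)%R.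
Proof. apply (sum_n_plus (G := R_AbelianMonoid)). Qed.

Lemma sum_n_Rmult_l (a : R) (f : nat -> R) K : sum_n (fun j => a * f j)%R K = (a * sum_n f K)%R.
Proof. apply (sum_n_mult_l (K := R_Ring)). Qed.

Lemma sum_n_RtoC_scal (x : nat -> R) (y : C) K :
  sum_n (fun j => RtoC (x j) * y) K = RtoC (sum_n x K) * y.
Proof.
  induction K as [|K IH]; [now rewrite !sum_O|].
  rewrite !sum_Sn, IH.
  change (RtoC (sum_n x K) * y + RtoC (x (S K)) * y = RtoC (sum_n x K + x (S K)) * y).
  rewrite RtoC_plus; ring_C.
Qed.

Lemma sign_change (f : nat -> R) a b : (a < b)%nat -> (0 <= f a)%R -> (f b <= 0)%R ->
  exists i, (a <= i < b)%nat /\ (0 <= f i)%R /\ (f (S i) <= 0)%R.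
Proof.
  induction b as [|b IH]; intros Hab Ha Hb; [lia|].
  destruct (Rle_dec 0 (f b)) as [Hfb|Hfb].
  - exists b; repeat split; auto; lia.
  - destruct (Nat.eq_dec a b) as [->|]; [lra|].
    destruct IH as [i [Hi Hf]]; [lia|auto|lra|]; exists i; split; [lia|auto].
Qed.

(** [cross x y] is [Im (conj x * y)]; it is positive iff [y] lies counterclockwise of [x]. *)
Definition cross (x y : C) : R := (fst x * snd y - snd x * fst y)%R.

Lemma cross_sum_r x (f : nat -> C) K :
  cross x (sum_n f K) = sum_n (fun l => cross x (f l)) K.
Proof.
  induction K as [|K IH]; [now rewrite !sum_O|].
  rewrite !sum_Sn, <- IH.
  change (cross x (sum_n f K + f (S K)) = cross x (sum_n f K) + cross x (f (S K)))%R.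
  unfold cross; simpl; ring.
Qed.

Lemma Rabs_cross_le x y : (Rabs (cross x y) <= Cmod x * Cmod y)%R.
Proof.
  replace (cross x y) with (snd (Cconj x * y)) by (unfold cross; simpl; ring).
  rewrite <- Cmod_conj with (c := x), <- Cmod_mult.
  eapply Rle_trans; [apply Rmax_r | apply Rmax_Cmod].
Qed.

Lemma cross_decomp x y z : cross x y <> 0%R ->
  z = RtoC (cross z y / cross x y) * x + RtoC (cross x z / cross x y) * y.
Proof. intros H; unfold cross in *; apply C_eq; simpl; field; auto. Qed.

Lemma halfplane_series_closed (f : nat -> C) z e p :
  @is_series C_AbsRing C_NormedModule f z ->
  (forall k, 0 <= cross e (sum_n f k - p))%R -> (0 <= cross e (z - p))%R.
Proof.
  intros Hf Hk; apply Rnot_lt_le; intros Hneg.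
  set (d := (- cross e (z - p))%R).
  assert (Hd : (0 < d / (Cmod e + 1))%R)
    by (apply Rdiv_lt_0_compat; [unfold d; lra | pose proof (Cmod_ge_0 e); lra]).
  destruct (proj1 (filterlim_locally_ball_norm _ _) Hf (mkposreal _ Hd)) as [k Hk'].
  specialize (Hk' k (le_n k)); specialize (Hk k).
  unfold ball_norm in Hk'; simpl in Hk'.
  set (s := sum_n f k) in *; change (@sum_n C_NormedModule f k) with s in Hk'.
  assert (Hsplit : cross e (s - p) = (cross e (z - p) + cross e (s - z))%R)
    by (unfold cross; simpl; ring).
  assert (Hbound : (Rabs (cross e (s - z)) < d)%R).
  { eapply Rle_lt_trans; [apply Rabs_cross_le|].
    apply Rle_lt_trans with (Cmod e * (d / (Cmod e + 1)))%R.
    - apply Rmult_le_compat_l; [apply Cmod_ge_0 | left; exact Hk'].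
    - pose proof (Cmod_ge_0 e).
      apply Rmult_lt_reg_r with (Cmod e + 1)%R; [lra|].
      field_simplify; [|lra]. unfold d in *; nra. }
  pose proof (Rle_abs (cross e (s - z))); unfold d in *; lra.
Qed.

Lemma cis_add a b : cis a * cis b = cis (a + b).
Proof. unfold cis; apply C_eq; simpl; rewrite ?cos_plus, ?sin_plus; ring. Qed.

Lemma cis_pow a n : Cpow (cis a) n = cis (INR n * a).
Proof.
  induction n as [|n IH].
  - simpl; unfold cis; now rewrite Rmult_0_l, cos_0, sin_0.
  - rewrite Cpow_S, IH, cis_add, S_INR; f_equal; ring.
Qed.

Lemma Cmod_cis a : Cmod (cis a) = 1%R.
Proof.
  unfold Cmod, cis; simpl; pose proof (sin2_cos2 a) as H; unfold Rsqr in H.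
  rewrite !Rmult_1_r, Rplus_comm, H; apply sqrt_1.
Qed.

Lemma cis_add_PI a : cis (a + PI) = - cis a.
Proof. unfold cis; now rewrite neg_cos, neg_sin. Qed.

Lemma cis_period a k : cis (a + 2 * INR k * PI) = cis a.
Proof. unfold cis; now rewrite cos_period, sin_period. Qed.

Lemma cis_IZR_PI k a : cis (IZR k * PI + a) = RtoC (cos (IZR k * PI)) * cis a.
Proof.
  rewrite <- cis_add; unfold cis at 1.
  now rewrite (sin_eq_0_1 _ (ex_intro _ k eq_refl)).
Qed.

Lemma cos_IZR_PI_sq k : (cos (IZR k * PI) * cos (IZR k * PI) = 1)%R.
Proof.
  pose proof (sin2_cos2 (IZR k * PI)); unfold Rsqr in *.
  rewrite (sin_eq_0_1 _ (ex_intro _ k eq_refl)) in *; lra.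
Qed.

Definition zonotope (N : nat) (g : nat -> C) (z : C) : Prop :=
  exists t : nat -> R, (forall l, (l < N)%nat -> -1 <= t l <= 1)%R /\
    z = sum_n (fun l => RtoC (t l) * g l) (N - 1).

Lemma zonotope_ext N g g' z : (0 < N)%nat -> (forall l, (l < N)%nat -> g l = g' l) ->
  zonotope N g z <-> zonotope N g' z.
Proof.
  intros HN Hg; split; intros [t [Ht ->]]; exists t; split; auto;
    apply sum_n_ext_loc; intros l Hl; rewrite Hg by lia; reflexivity.
Qed.

Definition inverse_on (N : nat) (sigma tau : nat -> nat) : Prop :=
  (forall l, (l < N)%nat -> (sigma l < N)%nat /\ tau (sigma l) = l) /\
  (forall k, (k < N)%nat -> (tau k < N)%nat /\ sigma (tau k) = k).

Lemma sum_n_perm {G : AbelianMonoid} N (sigma tau : nat -> nat) (f : nat -> G) :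
  (0 < N)%nat -> inverse_on N sigma tau ->
  sum_n (fun l => f (sigma l)) (N - 1) = sum_n f (N - 1).
Proof.
  intros HN [Hs Ht].
  set (F := fun k l => if (sigma l =? k)%nat then f k else zero).
  transitivity (sum_n (fun l => sum_n (fun k => F k l) (N - 1)) (N - 1)).
  - apply sum_n_ext_loc; intros l Hl; symmetry.
    destruct (Hs l) as [Hsl _]; [lia|].
    rewrite (sum_n_single _ _ (sigma l)); [unfold F; now rewrite Nat.eqb_refl | lia |].
    intros k _ Hk; unfold F; now rewrite (proj2 (Nat.eqb_neq (sigma l) k)) by auto.
  - rewrite <- sum_n_switch; apply sum_n_ext_loc; intros k Hk.
    destruct (Ht k) as [Htk Hst]; [lia|].
    rewrite (sum_n_single _ _ (tau k)); [unfold F; now rewrite Hst, Nat.eqb_refl | lia |].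
    intros l Hl Hne; unfold F; destruct (Nat.eqb_spec (sigma l) k); [|auto].
    exfalso; apply Hne; subst k; symmetry; apply Hs; lia.
Qed.

Lemma zonotope_opp N g z : zonotope N g z -> zonotope N g (- z).
Proof.
  intros [t [Ht ->]]; exists (fun l => - t l)%R; split.
  - intros l Hl; specialize (Ht l Hl); lra.
  - rewrite (sum_n_ext (fun l => RtoC (- t l) * g l) (fun l => RtoC (-1) * (RtoC (t l) * g l)))
      by (intros; rewrite RtoC_opp; ring_C).
    rewrite sum_n_Cmult_l; ring_C.
Qed.

Lemma zonotope_sign_flip N g (s : nat -> R) z :
  (forall l, s l = 1 \/ s l = -1)%R ->
  zonotope N (fun l => RtoC (s l) * g l) z <-> zonotope N g z.
Proof.
  intros Hs.
  assert (Hss : forall l, (s l * s l = 1)%R) by (intros l; destruct (Hs l) as [-> | ->]; ring).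
  assert (Hflip : forall t : nat -> R, (forall l, (l < N)%nat -> -1 <= t l <= 1)%R ->
    forall l, (l < N)%nat -> (-1 <= t l * s l <= 1)%R)
    by (intros t Ht l Hl; specialize (Ht l Hl); destruct (Hs l) as [-> | ->]; lra).
  split; intros [t [Ht ->]]; exists (fun l => t l * s l)%R; split; auto;
    apply sum_n_ext; intros l.
  - rewrite RtoC_mult; ring_C.
  - rewrite <- (Rmult_1_r (t l)) at 1; rewrite <- (Hss l), !RtoC_mult; ring_C.
Qed.

Lemma zonotope_perm N g sigma tau z : (0 < N)%nat -> inverse_on N sigma tau ->
  zonotope N (fun l => g (sigma l)) z <-> zonotope N g z.
Proof.
  intros HN Hinv; split; intros [t [Ht ->]].
  - exists (fun k => t (tau k)); split.
    + intros k Hk; apply Ht, (proj2 Hinv k Hk).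
    + rewrite <- (sum_n_perm N sigma tau (fun k => RtoC (t (tau k)) * g k)) by auto.
      apply sum_n_ext_loc; intros l Hl; now rewrite (proj2 (proj1 Hinv l ltac:(lia))).
  - exists (fun l => t (sigma l)); split.
    + intros l Hl; apply Ht, (proj1 Hinv l Hl).
    + now rewrite (sum_n_perm N sigma tau (fun k => RtoC (t k) * g k)).
Qed.

(** Two independent generators span a parallelogram containing a disc around the origin. *)
Lemma zonotope_interior N g p q : (p < N)%nat -> (q < N)%nat -> p <> q ->
  cross (g p) (g q) <> 0%R -> nonempty_interior (zonotope N g).
Proof.
  intros Hp Hq Hpq HD; set (D := cross (g p) (g q)) in *.
  set (K := (Cmod (g p) + Cmod (g q) + 1)%R).
  assert (HK : (0 < K)%R)
    by (pose proof (Cmod_ge_0 (g p)); pose proof (Cmod_ge_0 (g q)); unfold K; lra).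
  assert (HD' : (0 < Rabs D)%R) by now apply Rabs_pos_lt.
  exists 0, (Rabs D / K)%R; split; [now apply Rdiv_lt_0_compat|].
  intros z Hz; replace (z - 0) with z in Hz by ring_C.
  assert (Hcoef : forall x y, (Rabs (cross x y) <= Cmod z * Cmod (g q) \/
      Rabs (cross x y) <= Cmod (g p) * Cmod z)%R -> (Rabs (cross x y / D) <= 1)%R).
  { intros x y Hxy; unfold Rdiv; rewrite Rabs_mult, Rabs_inv.
    apply Rmult_le_reg_r with (Rabs D); [lra|].
    rewrite Rmult_assoc, Rinv_l, Rmult_1_r, Rmult_1_l by lra.
    assert (Hzk : (Cmod z * K <= Rabs D)%R).
    { apply Rmult_le_reg_r with (/ K)%R; [now apply Rinv_0_lt_compat|].
      rewrite Rmult_assoc, Rinv_r, Rmult_1_r by lra; left; exact Hz. }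
    pose proof (Cmod_ge_0 z); pose proof (Cmod_ge_0 (g p)); pose proof (Cmod_ge_0 (g q)).
    unfold K in Hzk; destruct Hxy; nra. }
  exists (fun l => point_mass p (cross z (g q) / D) l + point_mass q (cross (g p) z / D) l)%R.
  split.
  - intros l _; unfold point_mass.
    pose proof (Hcoef z (g q) (or_introl (Rabs_cross_le _ _))) as Ha.
    pose proof (Hcoef (g p) z (or_intror (Rabs_cross_le _ _))) as Hb.
    apply Rabs_le_between in Ha, Hb.
    destruct (Nat.eqb_spec l p), (Nat.eqb_spec l q); lia || lra.
  - rewrite (sum_n_ext _ (fun l => RtoC (point_mass p (cross z (g q) / D) l) * g l +
        RtoC (point_mass q (cross (g p) z / D) l) * g l)) by (intros; rewrite RtoC_plus; ring_C).
    rewrite sum_n_Cplus, !sum_n_point_mass_scal by lia.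
    now apply cross_decomp.
Qed.

Section RegularZonotope.

Variables (N : nat) (w : nat -> R).
Hypothesis HN : (2 <= N)%nat.
Hypothesis Hw : forall k, (0 < w k)%R.

Definition dir (k : nat) : R := (INR k * PI / INR N)%R.
Definition generator (k : nat) : C := RtoC (w k) * cis (dir k).

Lemma INR_N_pos : (0 < INR N)%R.
Proof. apply lt_0_INR; lia. Qed.

Lemma dir_add_N k : dir (k + N) = (dir k + PI)%R.
Proof. pose proof INR_N_pos; unfold dir; rewrite plus_INR; field; lra. Qed.

Lemma sin_dir_sub_pos a b : (a < b < N)%nat -> (0 < sin (dir b - dir a))%R.
Proof.
  intros [Hab HbN]; pose proof INR_N_pos; pose proof PI_RGT_0.
  apply lt_INR in Hab, HbN; pose proof (pos_INR a).
  replace (dir b - dir a)%R with ((INR b - INR a) * (PI / INR N))%R by (unfold dir; field; lra).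
  apply sin_gt_0.
  - apply Rmult_lt_0_compat; [lra | now apply Rdiv_lt_0_compat].
  - apply Rlt_le_trans with (INR N * (PI / INR N))%R; [apply Rmult_lt_compat_r|].
    + now apply Rdiv_lt_0_compat.
    + lra.
    + right; field; lra.
Qed.

Lemma cross_generator i k :
  cross (generator i) (generator k) = (w i * w k * sin (dir k - dir i))%R.
Proof. unfold cross, generator, cis; simpl; rewrite sin_minus; ring. Qed.

Definition vsign (i k : nat) : R :=
  if (i <? N)%nat then (if (k <? i)%nat then 1 else -1)%R
  else (if (k <? i - N)%nat then -1 else 1)%R.

Definition corner (i : nat) : C := sum_n (fun k => RtoC (vsign i k) * generator k) (N - 1).

Definition edge (i : nat) : C := RtoC (2 * w (i mod N)) * cis (dir i).

Ltac vsign_cases := unfold vsign;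
  repeat match goal with |- context [Nat.ltb ?a ?b] => destruct (Nat.ltb_spec a b) end;
  try lia; try lra.

Lemma vsign_pm i k : (vsign i k = 1 \/ vsign i k = -1)%R.
Proof. vsign_cases. Qed.

Lemma vsign_add_N i k : (i <= N)%nat -> (k < N)%nat -> vsign (i + N) k = (- vsign i k)%R.
Proof. intros; replace (i + N - N)%nat with i by lia; vsign_cases. Qed.

Lemma vsign_succ i k : (i < N)%nat -> (k < N)%nat ->
  (vsign (S i) k - vsign i k = if (k =? i)%nat then 2 else 0)%R.
Proof. intros; destruct (Nat.eqb_spec k i); vsign_cases. Qed.

Lemma vsign_cross_generator i k : (i < N)%nat -> (k < N)%nat ->
  (- vsign i k * cross (generator i) (generator k))%R = Rabs (cross (generator i) (generator k)).
Proof.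
  intros Hi Hk; rewrite cross_generator.
  pose proof (Hw i); pose proof (Hw k).
  unfold vsign; destruct (Nat.ltb_spec i N) as [_|]; [|lia].
  destruct (Nat.ltb_spec k i).
  - pose proof (sin_dir_sub_pos k i ltac:(lia)).
    rewrite <- (Ropp_minus_distr (dir i)), sin_neg.
    rewrite Rabs_left; [ring|].
    rewrite <- Ropp_mult_distr_r; apply Ropp_lt_gt_0_contravar.
    apply Rmult_lt_0_compat; [nra | lra].
  - destruct (Nat.eq_dec k i) as [->|].
    + rewrite Rminus_diag, sin_0, !Rmult_0_r, Rabs_R0; ring.
    + pose proof (sin_dir_sub_pos i k ltac:(lia)).
      rewrite Rabs_pos_eq; [ring|].
      left; apply Rmult_lt_0_compat; [nra | lra].
Qed.

Lemma cross_generator_neq i k : (i < N)%nat -> (k < N)%nat -> k <> i ->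
  cross (generator i) (generator k) <> 0%R.
Proof.
  intros Hi Hk Hki; rewrite cross_generator; pose proof (Hw i); pose proof (Hw k).
  apply Rmult_integral_contrapositive; split; [nra|].
  destruct (Nat.lt_ge_cases k i).
  - rewrite <- (Ropp_minus_distr (dir i)), sin_neg.
    pose proof (sin_dir_sub_pos k i ltac:(lia)); lra.
  - pose proof (sin_dir_sub_pos i k ltac:(lia)); lra.
Qed.

Lemma corner_add_N i : (i <= N)%nat -> corner (i + N) = - corner i.
Proof.
  intros Hi; unfold corner.
  rewrite (sum_n_ext_loc _ (fun k => RtoC (-1) * (RtoC (vsign i k) * generator k)))
    by (intros k Hk; rewrite vsign_add_N, RtoC_opp by lia; ring_C).
  rewrite sum_n_Cmult_l; ring_C.
Qed.

Lemma corner_N : corner N = - corner 0.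
Proof. exact (corner_add_N 0 ltac:(lia)). Qed.

Lemma corner_2N : corner (2 * N) = corner 0.
Proof.
  replace (2 * N)%nat with (N + N)%nat by lia.
  rewrite corner_add_N, corner_N by lia; ring_C.
Qed.

Lemma edge_lt_N i : (i < N)%nat -> edge i = RtoC 2 * generator i.
Proof.
  intros Hi; unfold edge, generator; rewrite Nat.mod_small by lia.
  rewrite RtoC_mult; ring_C.
Qed.

Lemma edge_add_N i : edge (i + N) = - edge i.
Proof.
  unfold edge; rewrite dir_add_N, cis_add_PI.
  replace ((i + N) mod N)%nat with (i mod N) by
    (replace (i + N)%nat with (i + 1 * N)%nat by lia; now rewrite Nat.Div0.mod_add).
  ring_C.
Qed.

Lemma corner_succ_lt_N i : (i < N)%nat -> corner (S i) - corner i = edge i.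
Proof.
  intros Hi; unfold corner; rewrite <- sum_n_Cminus, edge_lt_N by lia.
  rewrite (sum_n_ext_loc _ (fun k => RtoC (vsign (S i) k - vsign i k) * generator k))
    by (intros; rewrite RtoC_minus; ring_C).
  rewrite (sum_n_single _ _ i); [| lia |].
  - rewrite vsign_succ, Nat.eqb_refl by lia; reflexivity.
  - intros k Hk Hki; rewrite vsign_succ, (proj2 (Nat.eqb_neq k i) Hki) by lia.
    apply Cmult_0_l.
Qed.

Lemma corner_succ i : (i < 2 * N)%nat -> corner (S i) - corner i = edge i.
Proof.
  intros Hi; destruct (Nat.lt_ge_cases i N); [now apply corner_succ_lt_N|].
  replace i with (i - N + N)%nat by lia; replace (S (i - N + N)) with (S (i - N) + N)%nat by lia.
  rewrite !corner_add_N, edge_add_N, <- corner_succ_lt_N by lia; ring_C.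
Qed.

Lemma cross_edge_sum i t : (i < N)%nat ->
  cross (edge i) (sum_n (fun k => RtoC (t k) * generator k) (N - 1) - corner i) =
  sum_n (fun k => 2 * ((t k - vsign i k) * cross (generator i) (generator k)))%R (N - 1).
Proof.
  intros Hi; unfold corner; rewrite <- sum_n_Cminus, cross_sum_r, edge_lt_N by auto.
  apply sum_n_ext; intros k; unfold cross; simpl; ring.
Qed.

Lemma cross_edge_term_nonneg i k t : (i < N)%nat -> (k < N)%nat -> (-1 <= t <= 1)%R ->
  (0 <= (t - vsign i k) * cross (generator i) (generator k))%R.
Proof.
  intros Hi Hk Ht; pose proof (vsign_cross_generator i k Hi Hk).
  pose proof (Rabs_pos (cross (generator i) (generator k))).
  destruct (vsign_pm i k) as [Hs|Hs]; rewrite Hs in *; nra.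
Qed.

Definition in_halfplanes (z : C) : Prop :=
  forall i, (i < 2 * N)%nat -> (0 <= cross (edge i) (z - corner i))%R.

Lemma zonotope_in_halfplanes z : zonotope N generator z -> in_halfplanes z.
Proof.
  assert (Hlt : forall z i, zonotope N generator z -> (i < N)%nat ->
    (0 <= cross (edge i) (z - corner i))%R).
  { intros z' i [t [Ht ->]] Hi; rewrite cross_edge_sum by auto.
    apply sum_n_nonneg; intros k Hk.
    pose proof (cross_edge_term_nonneg i k (t k) Hi ltac:(lia) (Ht k ltac:(lia))); lra. }
  intros Hz i Hi; destruct (Nat.lt_ge_cases i N); [auto|].
  replace i with (i - N + N)%nat by lia; rewrite edge_add_N, corner_add_N by lia.
  replace (cross (- edge (i - N)) (z - - corner (i - N)))
    with (cross (edge (i - N)) (- z - corner (i - N))) by (unfold cross; simpl; ring).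
  apply Hlt; [now apply zonotope_opp | lia].
Qed.

Lemma cross_corner_edge_pos i : (i < 2 * N)%nat -> (0 < cross (corner i) (edge i))%R.
Proof.
  intros Hi.
  assert (Hlt : forall i, (i < N)%nat -> (0 < cross (corner i) (edge i))%R).
  { clear i Hi; intros i Hi.
    replace (cross (corner i) (edge i))
      with (cross (edge i) (sum_n (fun k => RtoC 0 * generator k) (N - 1) - corner i))
      by (rewrite sum_n_zero by (intros; apply Cmult_0_l); unfold cross; simpl; ring).
    rewrite cross_edge_sum by auto.
    set (k := if (i =? 0)%nat then 1%nat else 0%nat).
    assert (Hk : (k < N)%nat /\ k <> i) by (unfold k; destruct (Nat.eqb_spec i 0); lia).
    apply Rlt_le_trans with (2 * ((0 - vsign i k) * cross (generator i) (generator k)))%R.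
    - rewrite Rminus_0_l, vsign_cross_generator by lia.
      pose proof (Rabs_pos_lt _ (cross_generator_neq i k Hi (proj1 Hk) (proj2 Hk))); lra.
    - apply (sum_n_ge_term (fun k => 2 * ((0 - vsign i k) * cross (generator i) (generator k)))%R);
        [lia|]; intros l Hl.
      pose proof (cross_edge_term_nonneg i l 0 Hi ltac:(lia) ltac:(lra)); lra. }
  destruct (Nat.lt_ge_cases i N); [auto|].
  replace i with (i - N + N)%nat by lia; rewrite edge_add_N, corner_add_N by lia.
  replace (cross (- corner (i - N)) (- edge (i - N))) with (cross (corner (i - N)) (edge (i - N)))
    by (unfold cross; simpl; ring).
  apply Hlt; lia.
Qed.

Definition vertex (j : nat) : C := corner (j mod (2 * N)).

Lemma vertex_lt j : (j < 2 * N)%nat -> vertex j = corner j.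
Proof. intros; unfold vertex; now rewrite Nat.mod_small. Qed.

Lemma vertex_succ_corner i : (i < 2 * N)%nat -> vertex (S i) = corner (S i).
Proof.
  intros Hi; destruct (Nat.eq_dec (S i) (2 * N)) as [He|]; [|apply vertex_lt; lia].
  unfold vertex; rewrite He, Nat.Div0.mod_same; symmetry; apply corner_2N.
Qed.

Lemma vertex_periodic j : vertex (j + 2 * N) = vertex j.
Proof.
  unfold vertex; replace (j + 2 * N)%nat with (j + 1 * (2 * N))%nat by lia.
  now rewrite Nat.Div0.mod_add.
Qed.

Lemma edge_mod j : edge (j mod (2 * N)) = edge j.
Proof.
  pose proof (Nat.div_mod_eq j (2 * N)) as Hj.
  set (q := (j / (2 * N))%nat) in *; set (i := (j mod (2 * N))%nat) in *.
  assert (Hmod : (i mod N = j mod N)%nat).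
  { rewrite Hj; replace (2 * N * q + i)%nat with (i + 2 * q * N)%nat by lia.
    now rewrite Nat.Div0.mod_add. }
  assert (Hdir : dir j = (dir i + 2 * INR q * PI)%R).
  { pose proof INR_N_pos; unfold dir; rewrite Hj, plus_INR, !mult_INR; simpl; field; lra. }
  unfold edge; now rewrite Hmod, Hdir, cis_period.
Qed.

Lemma vertex_succ j : vertex (S j) - vertex j = edge j.
Proof.
  set (i := (j mod (2 * N))%nat).
  assert (Hi : (i < 2 * N)%nat) by (apply Nat.mod_upper_bound; lia).
  assert (HS : vertex (S j) = vertex (S i)).
  { unfold vertex, i; replace (S j) with (j + 1)%nat by lia.
    replace (S (j mod (2 * N))) with (j mod (2 * N) + 1)%nat by lia.
    now rewrite Nat.Div0.add_mod_idemp_l. }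
  rewrite HS, vertex_succ_corner, <- edge_mod by auto; apply corner_succ, Hi.
Qed.

Lemma edge_neq_0 j : edge j <> 0.
Proof.
  intros H; apply (f_equal Cmod) in H; unfold edge in H.
  rewrite Cmod_mult, Cmod_R, Cmod_cis, Cmod_0, Rabs_pos_eq in H; pose proof (Hw (j mod N)); lra.
Qed.

Lemma edge_succ j :
  edge (S j) = RtoC (w (S j mod N) / w (j mod N)) * cis (PI / INR N) * edge j.
Proof.
  pose proof INR_N_pos; pose proof (Hw (j mod N)).
  unfold edge; replace (dir (S j)) with (PI / INR N + dir j)%R
    by (unfold dir; rewrite S_INR; field; lra).
  rewrite <- cis_add.
  replace (RtoC (2 * w (S j mod N)))
    with (RtoC (w (S j mod N) / w (j mod N)) * RtoC (2 * w (j mod N)))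
    by (rewrite <- RtoC_mult; f_equal; field; lra).
  ring_C.
Qed.

(** With [corner N = - corner 0], any leftover weight is split equally between these two. *)
Lemma conv_two_corners z i a b : (i < 2 * N)%nat -> (0 <= a)%R -> (0 <= b)%R -> (a + b <= 1)%R ->
  z = RtoC a * corner i + RtoC b * corner (S i) -> conv_hull (2 * N) vertex z.
Proof.
  intros Hi Ha Hb Hab ->.
  set (e := ((1 - a - b) / 2)%R); set (i1 := ((S i) mod (2 * N))%nat).
  assert (Hi1 : (i1 < 2 * N)%nat) by (apply Nat.mod_upper_bound; lia).
  exists (fun j => point_mass i a j + point_mass i1 b j + point_mass 0 e j + point_mass N e j)%R.
  split; [|split].
  - intros j _; unfold point_mass.
    destruct (j =? i)%nat, (j =? i1)%nat, (j =? 0)%nat, (j =? N)%nat; unfold e; lra.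
  - rewrite !sum_n_Rplus, !sum_n_point_mass by lia; unfold e; lra.
  - rewrite (sum_n_ext_loc _ (fun j =>
        RtoC (point_mass i a j) * corner j + RtoC (point_mass i1 b j) * corner j +
        (RtoC (point_mass 0 e j) * corner j + RtoC (point_mass N e j) * corner j))).
    + rewrite !sum_n_Cplus, !sum_n_point_mass_scal by lia.
      change (corner i1) with (vertex (S i)); rewrite vertex_succ_corner by auto.
      rewrite corner_N; ring_C.
    + intros j Hj; rewrite vertex_lt by lia; rewrite !RtoC_plus; ring_C.
Qed.

Lemma halfplanes_sector z : in_halfplanes z -> exists i a b,
  (i < 2 * N)%nat /\ (0 <= a)%R /\ (0 <= b)%R /\ (a + b <= 1)%R /\
  z = RtoC a * corner i + RtoC b * corner (S i).
Proof.
  intros Hz; set (g := fun i => cross (corner i) z).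
  assert (Hsc : exists i, (i < 2 * N)%nat /\ (0 <= g i)%R /\ (g (S i) <= 0)%R).
  { assert (gN : g N = (- g 0%nat)%R).
    { unfold g; rewrite corner_N; unfold cross; simpl; ring. }
    assert (g2N : g (2 * N)%nat = g 0%nat) by (unfold g; now rewrite corner_2N).
    destruct (Rle_dec 0 (g 0%nat)).
    - destruct (sign_change g 0 N) as [i [Hi Hg]]; [lia | auto | lra |].
      exists i; split; [lia | auto].
    - destruct (sign_change g N (2 * N)) as [i [Hi Hg]]; [lia | lra | lra |].
      exists i; split; [lia | auto]. }
  destruct Hsc as [i [Hi [Hgi HgSi]]].
  set (D := cross (corner i) (corner (S i))).
  assert (HD : (0 < D)%R).
  { unfold D; replace (corner (S i)) with (corner i + edge i)
      by (rewrite <- (corner_succ i Hi); ring_C).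
    replace (cross (corner i) (corner i + edge i)) with (cross (corner i) (edge i))
      by (unfold cross; simpl; ring).
    now apply cross_corner_edge_pos. }
  pose proof (Hz i Hi) as Hhalf; rewrite <- corner_succ in Hhalf by auto.
  assert (Hsum : (cross z (corner (S i)) + g i <= D)%R)
    by (unfold g, D, cross in *; simpl in *; lra).
  exists i, (cross z (corner (S i)) / D)%R, (g i / D)%R.
  repeat split; auto.
  - apply Rdiv_le_0_compat; [|auto]; unfold g, cross in *; lra.
  - now apply Rdiv_le_0_compat.
  - apply Rmult_le_reg_r with D; [auto|].
    replace ((cross z (corner (S i)) / D + g i / D) * D)%R with (cross z (corner (S i)) + g i)%R
      by (field; lra); lra.
  - apply cross_decomp; fold D; lra.
Qed.

Lemma halfplanes_sub_conv z : in_halfplanes z -> conv_hull (2 * N) vertex z.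
Proof.
  intros Hz; destruct (halfplanes_sector z Hz) as (i & a & b & Hi & Ha & Hb & Hab & Hzab).
  exact (conv_two_corners z i a b Hi Ha Hb Hab Hzab).
Qed.

Lemma conv_sub_zonotope z : conv_hull (2 * N) vertex z -> zonotope N generator z.
Proof.
  intros [c [Hc [Hsum ->]]]; change (sum_n c (2 * N - 1) = 1%R) in Hsum.
  exists (fun k => sum_n (fun j => c j * vsign j k)%R (2 * N - 1)); split.
  - intros k Hk; split.
    + replace (-1)%R with (sum_n (fun j => -1 * c j)%R (2 * N - 1))
        by (rewrite sum_n_Rmult_l, Hsum; apply Rmult_1_r).
      apply sum_n_le_loc; intros j Hj; pose proof (Hc j ltac:(lia)).
      destruct (vsign_pm j k) as [-> | ->]; lra.
    + rewrite <- Hsum; apply sum_n_le_loc; intros j Hj; pose proof (Hc j ltac:(lia)).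
      destruct (vsign_pm j k) as [-> | ->]; lra.
  - rewrite (sum_n_ext_loc _
      (fun j => sum_n (fun k => RtoC (c j * vsign j k) * generator k) (N - 1))).
    + rewrite (sum_n_switch (G := C_AbelianMonoid)); apply sum_n_ext; intros k.
      now rewrite <- sum_n_RtoC_scal.
    + intros j Hj; rewrite vertex_lt by lia; unfold corner; rewrite <- sum_n_Cmult_l.
      apply sum_n_ext; intros k; rewrite RtoC_mult; ring_C.
Qed.

Lemma zonotope_series_closed (f : nat -> C) z :
  @is_series C_AbsRing C_NormedModule f z ->
  (forall k, zonotope N generator (sum_n f k)) -> zonotope N generator z.
Proof.
  intros Hf Hk; apply conv_sub_zonotope, halfplanes_sub_conv; intros i Hi.
  apply (halfplane_series_closed f z); auto; intros k.
  now apply zonotope_in_halfplanes.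
Qed.

Theorem regular_zonotope_polygon :
  is_polygon_all_angles (zonotope N generator) (2 * N) (PI - PI / INR N).
Proof.
  exists vertex; split; [|split; [|split]].
  - apply vertex_periodic.
  - intros j; rewrite vertex_succ; apply edge_neq_0.
  - intros j; exists (w (S j mod N) / w (j mod N))%R; split; [now apply Rdiv_lt_0_compat|].
    rewrite !vertex_succ, edge_succ; do 3 f_equal; ring.
  - intros z; split; [intros; now apply halfplanes_sub_conv, zonotope_in_halfplanes
                     | apply conv_sub_zonotope].
Qed.

Lemma regular_zonotope_interior : nonempty_interior (zonotope N generator).
Proof. apply (zonotope_interior N generator 1 0); try lia; apply cross_generator_neq; lia. Qed.

End RegularZonotope.

Lemma mul_mod_inverse (x a b n : Z) : (0 < n)%Z -> ((a * b) mod n = 1)%Z -> (0 <= x < n)%Z ->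
  (((x * a) mod n * b) mod n = x)%Z.
Proof.
  intros Hn Hab Hx.
  rewrite Z.mul_mod_idemp_l, <- Z.mul_assoc, <- Z.mul_mod_idemp_r, Hab, Z.mul_1_r by lia.
  now apply Z.mod_small.
Qed.

Section Attractor.

Variables (N : nat) (M M' : Z) (r : R).
Hypothesis HN : (2 <= N)%nat.
Hypothesis HM' : ((M' * M) mod Z.of_nat N = 1)%Z.
Hypothesis Hr : (Rpower 2 (- / INR N) <= r < 1)%R.

Definition lam : C := RtoC r * cis (PI * IZR M / INR N).

(** Writing [l * M = q * N + k] with [0 <= k < N] gives
    [lam ^ l = r ^ l * (-1) ^ q * cis (k * PI / N)]. *)
Definition perm (l : nat) : nat := Z.to_nat ((Z.of_nat l * M) mod Z.of_nat N).
Definition perm_inv (k : nat) : nat := Z.to_nat ((Z.of_nat k * M') mod Z.of_nat N).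
Definition lam_sign (l : nat) : R := cos (IZR ((Z.of_nat l * M) / Z.of_nat N) * PI).

Lemma perm_inverse_on : inverse_on N perm perm_inv.
Proof.
  assert (HNZ : (0 < Z.of_nat N)%Z) by lia.
  assert (HMM' : ((M * M') mod Z.of_nat N = 1)%Z) by now rewrite Z.mul_comm.
  unfold perm, perm_inv; split; intros l Hl.
  - pose proof (Z.mod_pos_bound (Z.of_nat l * M) _ HNZ).
    rewrite Z2Nat.id, mul_mod_inverse by lia; lia.
  - pose proof (Z.mod_pos_bound (Z.of_nat l * M') _ HNZ).
    rewrite Z2Nat.id, mul_mod_inverse by lia; lia.
Qed.

Lemma lam_sign_sq l : (lam_sign l * lam_sign l = 1)%R.
Proof. apply cos_IZR_PI_sq. Qed.

Lemma lam_pow l : Cpow lam l = RtoC (lam_sign l) * (RtoC (r ^ l) * cis (dir N (perm l))).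
Proof.
  assert (HNZ : (0 < Z.of_nat N)%Z) by lia.
  pose proof (INR_N_pos N HN).
  unfold lam; rewrite Cpow_mult_l, <- RtoC_pow, cis_pow.
  replace (INR l * (PI * IZR M / INR N))%R
    with (IZR ((Z.of_nat l * M) / Z.of_nat N) * PI + dir N (perm l))%R.
  - rewrite cis_IZR_PI; unfold lam_sign; ring_C.
  - pose proof (Z.mod_pos_bound (Z.of_nat l * M) _ HNZ).
    pose proof (Z.div_mod (Z.of_nat l * M) (Z.of_nat N) ltac:(lia)) as Hdm.
    apply (f_equal IZR) in Hdm; rewrite plus_IZR, !mult_IZR in Hdm.
    unfold dir, perm; rewrite (INR_IZR_INZ (Z.to_nat _)), Z2Nat.id by lia.
    rewrite (INR_IZR_INZ l), (INR_IZR_INZ N) in *.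
    replace (IZR (Z.of_nat l) * (PI * IZR M / IZR (Z.of_nat N)))%R
      with (IZR (Z.of_nat l) * IZR M * PI / IZR (Z.of_nat N))%R by (field; lra).
    rewrite Hdm; field; lra.
Qed.

Lemma r_pos : (0 < r)%R.
Proof. eapply Rlt_le_trans; [apply exp_pos | apply Hr]. Qed.

Lemma r_pow_N_ge_half : (/ 2 <= r ^ N)%R.
Proof.
  pose proof (INR_N_pos N HN).
  replace (/ 2)%R with (Rpower 2 (- / INR N) ^ N)%R.
  - apply pow_incr; split; [left; apply exp_pos | apply Hr].
  - rewrite <- Rpower_pow, Rpower_mult by apply exp_pos.
    replace (- / INR N * INR N)%R with (- (1))%R by (field; lra).
    rewrite Rpower_Ropp, Rpower_1; lra.
Qed.

Lemma r_pow_N_lt_1 : (r ^ N < 1)%R.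
Proof. pose proof r_pos; apply pow_lt_1_compat; [lra | lia]. Qed.

Definition rho : R := (r ^ N * cos (IZR M * PI))%R.

Lemma lam_pow_N : Cpow lam N = RtoC rho.
Proof.
  pose proof (INR_N_pos N HN).
  unfold lam, rho; rewrite Cpow_mult_l, <- RtoC_pow, cis_pow.
  replace (INR N * (PI * IZR M / INR N))%R with (IZR M * PI + 0)%R by (field; lra).
  rewrite cis_IZR_PI; unfold cis; rewrite cos_0, sin_0; apply C_eq; simpl; ring.
Qed.

Lemma Rabs_rho : Rabs rho = (r ^ N)%R.
Proof.
  pose proof r_pos; pose proof (cos_IZR_PI_sq M).
  unfold rho; rewrite Rabs_mult, (Rabs_pos_eq (r ^ N)) by (apply pow_le; lra).
  replace (Rabs (cos (IZR M * PI))) with 1%R; [ring|].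
  destruct (Rle_dec 0 (cos (IZR M * PI))); [rewrite Rabs_pos_eq | rewrite Rabs_left]; nra.
Qed.

Definition radius : R := (/ (1 - r ^ N))%R.

Lemma radius_ge_2 : (2 <= radius)%R.
Proof.
  pose proof r_pow_N_ge_half; pose proof r_pow_N_lt_1; unfold radius.
  replace 2%R with (/ / 2)%R by field; apply Rinv_le_contravar; lra.
Qed.

Lemma Rabs_rho_radius : (Rabs rho * radius = radius - 1)%R.
Proof. pose proof r_pow_N_lt_1; rewrite Rabs_rho; unfold radius; field; lra. Qed.

Lemma rho_neq_0 : rho <> 0%R.
Proof.
  intros H; pose proof radius_ge_2; pose proof Rabs_rho_radius.
  rewrite H, Rabs_R0 in *; lra.
Qed.

Definition lam_generator (l : nat) : C := RtoC radius * Cpow lam l.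

Definition tile_weight (k : nat) : R := (radius * r ^ perm_inv k)%R.

Lemma tile_weight_pos k : (0 < tile_weight k)%R.
Proof.
  pose proof radius_ge_2; pose proof r_pos.
  apply Rmult_lt_0_compat; [lra | now apply pow_lt].
Qed.

Lemma zonotope_lam_regular z :
  zonotope N lam_generator z <-> zonotope N (generator N tile_weight) z.
Proof.
  rewrite <- (zonotope_perm N (generator N tile_weight) perm perm_inv z ltac:(lia) perm_inverse_on).
  rewrite <- (zonotope_sign_flip N _ lam_sign z).
  - apply zonotope_ext; [lia|]; intros l Hl.
    unfold lam_generator, generator, tile_weight.
    rewrite lam_pow, (proj2 (proj1 perm_inverse_on l Hl)), RtoC_mult.
    transitivity (RtoC (lam_sign l * lam_sign l) *
      (RtoC radius * RtoC (r ^ l) * cis (dir N (perm l))));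
      [rewrite RtoC_mult; ring_C | rewrite lam_sign_sq; ring_C].
  - intros l; pose proof (lam_sign_sq l).
    destruct (Rle_dec 0 (lam_sign l)); [left | right]; nra.
Qed.

Lemma Cmod_lam_pow l : Cmod (Cpow lam l) = (r ^ l)%R.
Proof.
  pose proof r_pos; unfold lam.
  rewrite Cmod_pow, Cmod_mult, Cmod_R, Cmod_cis, Rabs_pos_eq by lra; f_equal; ring.
Qed.

Definition coef_sum (t : nat -> R) : C := sum_n (fun l => RtoC (t l) * lam_generator l) (N - 1).

Definition bounded (t : nat -> R) : Prop := forall l, (l < N)%nat -> (-1 <= t l <= 1)%R.

Lemma Cmod_coef_sum_le t : bounded t -> (Cmod (coef_sum t) <= INR N * radius)%R.
Proof.
  intros Ht; pose proof radius_ge_2; pose proof r_pos.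
  eapply Rle_trans; [apply Cmod_sum_n_le|].
  eapply Rle_trans; [apply (sum_n_le_loc _ (fun _ => radius))|].
  - intros l Hl; unfold lam_generator.
    rewrite !Cmod_mult, !Cmod_R, Cmod_lam_pow, (Rabs_pos_eq radius) by lra.
    pose proof (Ht l ltac:(lia)); pose proof (pow_le r l ltac:(lra)).
    pose proof (pow_incr r 1 l ltac:(lra)) as Hrl; rewrite pow1 in Hrl.
    assert (Rabs (t l) <= 1)%R by now apply Rabs_le.
    assert (0 <= radius * r ^ l)%R by nra; pose proof (Rabs_pos (t l)); nra.
  - rewrite sum_n_const; replace (S (N - 1)) with N by lia; lra.
Qed.

Definition digit (x : R) : R := if Rle_dec 0 x then 1%R else (-1)%R.

(** One step of the greedy expansion: the digit [digit (t 0)] is peeled off and the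
    coefficients are shifted; [lam ^ N = rho] turns the remainder into the last one. *)
Definition shift_coef (t : nat -> R) (l : nat) : R :=
  if (l <? N - 1)%nat then t (S l)
  else ((radius * t 0%nat - digit (t 0%nat)) / (rho * radius))%R.

Lemma shift_coef_bounded t : bounded t -> bounded (shift_coef t).
Proof.
  intros Ht l Hl; unfold shift_coef; destruct (Nat.ltb_spec l (N - 1)); [apply Ht; lia|].
  pose proof radius_ge_2; pose proof (Ht 0%nat ltac:(lia)).
  assert (Hden : Rabs (rho * radius) = (radius - 1)%R)
    by (rewrite Rabs_mult, (Rabs_pos_eq radius), Rabs_rho_radius by lra; reflexivity).
  (* this is where [radius >= 2], i.e. [r ^ N >= 1/2], is needed *)
  assert (Hnum : (Rabs (radius * t 0%nat - digit (t 0%nat)) <= radius - 1)%R)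
    by (unfold digit; destruct (Rle_dec 0 (t 0%nat)); apply Rabs_le; nra).
  apply Rabs_le_between.
  rewrite Rabs_div, Hden by (apply Rmult_integral_contrapositive; split; [apply rho_neq_0 | lra]).
  apply Rmult_le_reg_r with (radius - 1)%R; [lra|].
  unfold Rdiv; rewrite Rmult_assoc, Rinv_l, Rmult_1_r, Rmult_1_l by lra; lra.
Qed.

Lemma lam_generator_succ l : lam * lam_generator l = lam_generator (S l).
Proof. unfold lam_generator; rewrite Cpow_S; ring_C. Qed.

Lemma lam_lam_generator_last : lam * lam_generator (N - 1) = RtoC radius * RtoC rho.
Proof.
  rewrite lam_generator_succ; replace (S (N - 1)) with N by lia.
  unfold lam_generator; now rewrite lam_pow_N.
Qed.

Lemma coef_sum_split t : coef_sum t =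
  RtoC (t 0%nat) * RtoC radius + lam * sum_n (fun l => RtoC (t (S l)) * lam_generator l) (N - 2).
Proof.
  unfold coef_sum; replace (N - 1)%nat with (S (N - 2)) by lia; rewrite sum_n_shift.
  rewrite <- sum_n_Cmult_l.
  rewrite (sum_n_ext (fun l => lam * (RtoC (t (S l)) * lam_generator l))
    (fun l => RtoC (t (S l)) * lam_generator (S l)))
    by (intros; rewrite <- lam_generator_succ; ring_C).
  unfold lam_generator at 1; simpl Cpow; change plus with Cplus; ring_C.
Qed.

Lemma coef_sum_split_last t : coef_sum t =
  sum_n (fun l => RtoC (t l) * lam_generator l) (N - 2) +
  RtoC (t (N - 1)%nat) * lam_generator (N - 1).
Proof.
  unfold coef_sum; replace (N - 1)%nat with (S (N - 2)) by lia.
  rewrite sum_Sn; reflexivity.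
Qed.

Lemma coef_sum_shift t : coef_sum t = RtoC (digit (t 0%nat)) + lam * coef_sum (shift_coef t).
Proof.
  pose proof radius_ge_2; pose proof rho_neq_0.
  rewrite coef_sum_split, (coef_sum_split_last (shift_coef t)), Cmult_plus_distr_l.
  rewrite (sum_n_ext_loc (fun l => RtoC (shift_coef t l) * lam_generator l)
    (fun l => RtoC (t (S l)) * lam_generator l))
    by (intros l Hl; unfold shift_coef; destruct (Nat.ltb_spec l (N - 1)); [reflexivity | lia]).
  replace (shift_coef t (N - 1)) with ((radius * t 0%nat - digit (t 0%nat)) / (rho * radius))%R
    by (unfold shift_coef; destruct (Nat.ltb_spec (N - 1) (N - 1)); [lia | reflexivity]).
  set (X := lam * sum_n _ (N - 2)).
  set (c := ((radius * t 0%nat - digit (t 0%nat)) / (rho * radius))%R).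
  replace (lam * (RtoC c * lam_generator (N - 1))) with (RtoC c * (lam * lam_generator (N - 1)))
    by ring_C.
  rewrite lam_lam_generator_last; unfold c; apply C_eq; simpl; field; (split; [lra | auto]).
Qed.

Definition shift_iter (t : nat -> R) (k : nat) : nat -> R := Nat.iter k shift_coef t.

Lemma coef_sum_iter t k : coef_sum t =
  sum_n (fun j => RtoC (digit (shift_iter t j 0%nat)) * Cpow lam j) k +
  Cpow lam (S k) * coef_sum (shift_iter t (S k)).
Proof.
  induction k as [|k IH].
  - rewrite sum_O, coef_sum_shift at 1; simpl; ring_C.
  - rewrite IH, sum_Sn, (coef_sum_shift (shift_iter t (S k))).
    change (shift_coef (shift_iter t (S k))) with (shift_iter t (S (S k))).
    rewrite (Cpow_S lam (S k)); change plus with Cplus; ring_C.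
Qed.

Lemma zonotope_sub_A_set z : zonotope N lam_generator z -> A_set lam z.
Proof.
  intros [t [Ht ->]]; change (sum_n _ (N - 1)) with (coef_sum t).
  assert (Hbd : forall k, bounded (shift_iter t k))
    by (induction k; [exact Ht | now apply shift_coef_bounded]).
  exists (fun j => RtoC (digit (shift_iter t j 0%nat))); split.
  - intros j; unfold digit; destruct (Rle_dec _ _); [left | right]; reflexivity.
  - apply (proj2 (filterlim_locally_ball_norm _ _)); intros eps.
    pose proof radius_ge_2; pose proof r_pos; pose proof (INR_N_pos N HN).
    set (B := (INR N * radius + 1)%R).
    assert (HB : (0 < B)%R) by (unfold B; nra).
    destruct (pow_lt_1_zero r ltac:(rewrite Rabs_pos_eq; lra) (eps / B)%R
      ltac:(apply Rdiv_lt_0_compat; [apply cond_pos | auto])) as [K HK].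
    exists K; intros k Hk; unfold ball_norm.
    set (Sk := sum_n (fun j => RtoC (digit (shift_iter t j 0%nat)) * Cpow lam j) k).
    change (Cmod (Sk - coef_sum t) < eps)%R.
    rewrite (coef_sum_iter t k); fold Sk.
    replace (Sk - (Sk + Cpow lam (S k) * coef_sum (shift_iter t (S k))))
      with (- (Cpow lam (S k) * coef_sum (shift_iter t (S k)))) by ring_C.
    rewrite Cmod_opp, Cmod_mult, Cmod_lam_pow.
    pose proof (Cmod_coef_sum_le _ (Hbd (S k))).
    pose proof (HK (S k) ltac:(lia)) as HrK.
    rewrite Rabs_pos_eq in HrK by (apply pow_le; lra).
    pose proof (pow_le r (S k) ltac:(lra)).
    apply Rle_lt_trans with (r ^ S k * B)%R; [apply Rmult_le_compat_l; unfold B; lra|].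
    apply Rmult_lt_reg_r with (/ B)%R; [now apply Rinv_0_lt_compat|].
    rewrite Rmult_assoc, Rinv_r, Rmult_1_r by lra; exact HrK.
Qed.

Lemma zonotope_affine x z : (x = 1 \/ x = -1)%R ->
  zonotope N lam_generator z -> zonotope N lam_generator (RtoC x + lam * z).
Proof.
  intros Hx [t [Ht ->]]; change (sum_n _ (N - 1)) with (coef_sum t).
  pose proof radius_ge_2; pose proof Rabs_rho_radius.
  set (t' := fun l => match l with
                     | O => ((x + rho * radius * t (N - 1)%nat) / radius)%R
                     | S l => t l end).
  exists t'; split.
  - intros [|l] Hl; [|apply Ht; lia].
    pose proof (Ht (N - 1)%nat ltac:(lia)).
    assert (Hlast : (Rabs (rho * radius * t (N - 1)%nat) <= radius - 1)%R).
    { rewrite !Rabs_mult, (Rabs_pos_eq radius) by lra.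
      assert (Rabs (t (N - 1)%nat) <= 1)%R by now apply Rabs_le.
      pose proof (Rabs_pos (t (N - 1)%nat)); nra. }
    apply Rabs_le_between in Hlast; unfold t'.
    split; [apply Rmult_le_reg_r with radius | apply Rmult_le_reg_r with radius]; try lra;
      unfold Rdiv; rewrite Rmult_assoc, Rinv_l by lra; destruct Hx; subst x; lra.
  - change (sum_n _ (N - 1)) with (coef_sum t').
    rewrite (coef_sum_split t'), (coef_sum_split_last t), Cmult_plus_distr_l.
    set (X := lam * sum_n _ (N - 2)).
    replace (lam * (RtoC (t (N - 1)%nat) * lam_generator (N - 1)))
      with (RtoC (t (N - 1)%nat) * (lam * lam_generator (N - 1))) by ring_C.
    rewrite lam_lam_generator_last; unfold t'; apply C_eq; simpl; field; lra.
Qed.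

Lemma zonotope_0 : zonotope N lam_generator 0.
Proof.
  exists (fun _ => 0%R); split; [intros; lra|].
  symmetry; apply (sum_n_zero (G := C_AbelianMonoid)); intros; apply Cmult_0_l.
Qed.

Lemma partial_sums_in_zonotope (a : nat -> C) k : (forall j, a j = 1 \/ a j = -1) ->
  zonotope N lam_generator (sum_n (fun j => a j * Cpow lam j) k).
Proof.
  revert a; induction k as [|k IH]; intros a Ha.
  - rewrite sum_O; replace (a 0%nat * Cpow lam 0) with (a 0%nat + lam * 0) by (simpl; ring_C).
    destruct (Ha 0%nat) as [-> | ->]; apply zonotope_affine; auto using zonotope_0.
  - rewrite sum_n_shift.
    rewrite (sum_n_ext (fun l => a (S l) * Cpow lam (S l)) (fun l => lam * (a (S l) * Cpow lam l)))
      by (intros; rewrite Cpow_S; ring_C).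
    rewrite sum_n_Cmult_l; simpl Cpow; change plus with Cplus; rewrite Cmult_1_r.
    destruct (Ha 0%nat) as [-> | ->]; apply zonotope_affine; auto.
Qed.

Lemma A_set_iff z : A_set lam z <-> zonotope N (generator N tile_weight) z.
Proof.
  rewrite <- zonotope_lam_regular; split; [intros [a [Ha Hs]] | apply zonotope_sub_A_set].
  apply zonotope_lam_regular, (zonotope_series_closed N tile_weight HN tile_weight_pos _ z Hs).
  intros k; apply zonotope_lam_regular, partial_sums_in_zonotope.
  intros j; destruct (Ha j) as [-> | ->]; [left | right]; reflexivity.
Qed.

Theorem attractor_polygon :
  is_polygon_all_angles (A_set (RtoC r * cis (PI * IZR M / INR N))) (2 * N) (PI - PI / INR N) /\
  nonempty_interior (A_set (RtoC r * cis (PI * IZR M / INR N))).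
Proof.
  change (RtoC r * cis (PI * IZR M / INR N)) with lam; split.
  - destruct (regular_zonotope_polygon N tile_weight HN tile_weight_pos)
      as (v & Hper & Hne & Hturn & Hconv).
    exists v; repeat split; auto; intros Hz.
    + now apply Hconv, A_set_iff.
    + now apply A_set_iff, Hconv.
  - destruct (regular_zonotope_interior N tile_weight HN tile_weight_pos)
      as (z & e & He & Hball).
    exists z, e; split; auto; intros y Hy; now apply A_set_iff, Hball.
Qed.

End Attractor.

Lemma mod_inverse_of_gcd (m : Z) (n : nat) : (2 <= n)%nat -> Z.gcd m (Z.of_nat n) = 1%Z ->
  exists m', ((m' * m) mod Z.of_nat n = 1)%Z.
Proof.
  intros Hn Hg; destruct (Z.gcd_bezout m (Z.of_nat n) 1 Hg) as [u [v Huv]].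
  exists u; replace (u * m)%Z with (1 + (- v) * Z.of_nat n)%Z by lia.
  rewrite Z.mod_add by lia; apply Z.mod_small; lia.
Qed.

Theorem mainTheorem13 :
  (forall (n : nat) (m : Z) (r : R),
      (2 <= n)%nat -> Z.gcd m (Z.of_nat n) = 1%Z ->
      (Rpower 2 (- / INR n) <= r < 1)%R ->
      let lam := RtoC r * cis (PI * IZR m / INR n) in
      is_polygon_all_angles (A_set lam) (2 * n) (PI * (INR n - 1) / INR n) /\
      nonempty_interior (A_set lam)) /\
  (forall (n : nat) (m : Z) (r : R),
      (1 <= n)%nat -> Z.gcd m (Z.of_nat (2 * n + 1)) = 1%Z ->
      (Rpower 2 (- / INR (2 * n + 1)) <= r < 1)%R ->
      let lam := RtoC r * cis (2 * PI * IZR m / INR (2 * n + 1)) in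
      is_polygon_all_angles (A_set lam) (4 * n + 2)
        (2 * INR n * PI / INR (2 * n + 1)) /\
      nonempty_interior (A_set lam)).
Proof.
  split.
  - intros n m r Hn Hg Hr lam.
    destruct (mod_inverse_of_gcd m n Hn Hg) as [m' Hm'].
    pose proof (lt_0_INR n ltac:(lia)).
    replace (PI * (INR n - 1) / INR n)%R with (PI - PI / INR n)%R by (field; lra).
    exact (attractor_polygon n m m' r Hn Hm' Hr).
  - intros n m r Hn Hg Hr lam.
    destruct (mod_inverse_of_gcd m (2 * n + 1) ltac:(lia) Hg) as [m' Hm'].
    assert (Hinv : ((m' * Z.of_nat (n + 1) * (2 * m)) mod Z.of_nat (2 * n + 1) = 1)%Z).
    { replace (m' * Z.of_nat (n + 1) * (2 * m))%Z
        with (m' * m + (m' * m) * Z.of_nat (2 * n + 1))%Z by lia.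
      now rewrite Z.mod_add by lia. }
    pose proof (lt_0_INR (2 * n + 1) ltac:(lia)).
    replace (4 * n + 2)%nat with (2 * (2 * n + 1))%nat by lia.
    replace (2 * INR n * PI / INR (2 * n + 1))%R with (PI - PI / INR (2 * n + 1))%R
      by (rewrite plus_INR, mult_INR in *; simpl in *; field; lra).
    unfold lam; replace (2 * PI * IZR m / INR (2 * n + 1))%R
      with (PI * IZR (2 * m) / INR (2 * n + 1))%R by (rewrite mult_IZR; field; lra).
    exact (attractor_polygon (2 * n + 1) (2 * m) (m' * Z.of_nat (n + 1)) r ltac:(lia) Hinv Hr).
Qed.
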